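(* Let $\sigma_2:[n]\to\{\pm1\}$ be an extended string and $\sigma_1\preceq\sigma_2$ a sign string. Let $L^{\sigma_2}_{\sigma_1}\subset\mathbb{R}^n$ be the set of all $x=(x_1,\dots,x_n)$ such that $\sigma_2(k)x_k\le0$ and $|x_k|\le1$ for all $k\in[n]$, and such that, if $k_1<\dots<k_l$ are all the indices $k\in[n]$ with $x_k=0$, then $\sigma_1$ is the reduced string of $\tau:[l]\to\{\pm1\}$, $\tau(i)=\sigma_2(k_i)$. Then $L^{\sigma_2}_{\sigma_1}$ is contractible.
   Context: $[n]=\{1,\dots,n\}$; signs $\pm$ are identified with $\pm1$. An extended string is any function $\tau:[l]\to\{\pm1\}$ with $l\ge2$ (signs may repeat); its length is $|\tau|=l$. A sign string is an extended string whose consecutive values alternate (i.e. $\tau(j+1)=-\tau(j)$ for all $j$). For extended strings $\tau_1:[l_1]\to\{\pm1\}$, $\tau_2:[l_2]\to\{\pm1\}$, $\tau_1\preceq\tau_2$ ($\tau_1$ is a substring of $\tau_2$) if $\tau_1=\tau_2\circ f$ for some strictly increasing $f:[l_1]\to[l_2]$; $\tau_1\prec\tau_2$ if moreover $\tau_1\ne\tau_2$. The reduced string of an extended string $\tau$ is the unique sign string of maximal length which is a substring of $\tau$ (obtained by deleting repetitions of consecutive equal signs). When $l<2$ the condition ''$\sigma_1$ is the reduced string of $\tau$'' is understood to fail. *)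

From Stdlib Require Import Reals List Arith.
Import ListNotations.
Open Scope R_scope.

Inductive sign : Set := Pos | Neg.

Definition sgnR (s : sign) : R := match s with Pos => 1 | Neg => -1 end.

Definition opp_sign (s : sign) : sign := match s with Pos => Neg | Neg => Pos end.

(* An extended string tau : [l] -> {+-1} (l >= 2) is represented by the list
   [tau(1); ...; tau(l)] (0-based list positions). *)
Definition ext_string (t : list sign) : Prop := (2 <= length t)%nat.

Definition sign_string (t : list sign) : Prop :=
  ext_string t /\
  forall j : nat, (S j < length t)%nat -> nth (S j) t Pos = opp_sign (nth j t Pos).

Definition substring (t1 t2 : list sign) : Prop :=
  exists f : nat -> nat,
    (forall i j, (i < j < length t1)%nat -> (f i < f j)%nat) /\
    (forall i, (i < length t1)%nat -> (f i < length t2)%nat) /\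
    (forall i, (i < length t1)%nat -> nth i t1 Pos = nth (f i) t2 Pos).

Definition reduced_string_of (s t : list sign) : Prop :=
  ext_string t /\ sign_string s /\ substring s t /\
  forall u, sign_string u -> substring u t -> (length u <= length s)%nat.

(* Points of R^n are represented as x : nat -> R, with coordinates
   x 0, ..., x (n-1) and x k = 0 for k >= n. *)
Definition zero_dec (r : R) : bool := if Req_EM_T r 0 then true else false.

Definition zero_pattern (n : nat) (sigma2 : list sign) (x : nat -> R) : list sign :=
  map (fun k => nth k sigma2 Pos) (filter (fun k => zero_dec (x k)) (seq 0 n)).

Definition Lset (n : nat) (sigma2 sigma1 : list sign) (x : nat -> R) : Prop :=
  (forall k, (n <= k)%nat -> x k = 0) /\
  (forall k, (k < n)%nat -> sgnR (nth k sigma2 Pos) * x k <= 0 /\ Rabs (x k) <= 1) /\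
  reduced_string_of sigma1 (zero_pattern n sigma2 x).

(* Contractibility of a subset A of R^n (subspace topology of the Euclidean
   topology; we use the equivalent sup-metric): there is a point x0 in A and a
   continuous map H : [0,1] x A -> A with H(0,-) = id and H(1,-) = const x0. *)
Definition contractible (n : nat) (A : (nat -> R) -> Prop) : Prop :=
  exists (x0 : nat -> R) (H : R -> (nat -> R) -> (nat -> R)),
    A x0 /\
    (forall t x, 0 <= t <= 1 -> A x -> A (H t x)) /\
    (forall x, A x -> forall k, H 0 x k = x k) /\
    (forall x, A x -> forall k, H 1 x k = x0 k) /\
    (forall t x, 0 <= t <= 1 -> A x ->
       forall eps, 0 < eps -> exists delta, 0 < delta /\
         forall s y, 0 <= s <= 1 -> A y ->
           Rabs (t - s) < delta ->
           (forall k, (k < n)%nat -> Rabs (x k - y k) < delta) ->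
           forall k, (k < n)%nat -> Rabs (H t x k - H s y k) < eps).

(* A set [Z] of coordinates is admissible when the signs of [sigma2] along [Z] reduce to
   [sigma1], i.e. when [Z] admits a monotone, sign-preserving labelling by all the letters of
   [sigma1]; [Lset] consists of the points of the signed cube whose zero set is admissible.
   Let [q_0 < ... < q_(m-1)] be the leftmost embedding of [sigma1] into [sigma2] and [x0] the
   vertex of the cube vanishing exactly at the [q_i]. Points of [Lset] vanishing at all [q_i]
   contract linearly to [x0]. Downwards from [j = m], points vanishing at [q_0, ..., q_(j-1)]
   are moved linearly to points vanishing also at [q_j] by a Lipschitz map that creates the zero
   [q_j] and pushes off zero exactly those zeros incompatible with [q_j] having label [j].
   Inside the cube, the zero set of an interior point of a segment is the intersection of the
   zero sets of its ends, and these intersections stay admissible, so every segment lies in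
   [Lset]. Concatenating the linear homotopies gives a contraction that is Lipschitz in time and
   space, hence continuous. *)

From Stdlib Require Import Reals List Arith Lia Lra Classical ClassicalEpsilon.
Open Scope nat_scope.

Definition sign_eqb (a b : sign) : bool :=
  match a, b with Pos, Pos | Neg, Neg => true | _, _ => false end.

Lemma sign_eqb_eq a b : sign_eqb a b = true <-> a = b.
Proof. destruct a, b; simpl; split; congruence. Qed.

Lemma opp_sign_neq s : opp_sign s <> s.
Proof. destruct s; discriminate. Qed.

Lemma neq_opp_sign a b : a <> b -> b = opp_sign a.
Proof. destruct a, b; simpl; congruence. Qed.

Lemma opp_signK s : opp_sign (opp_sign s) = s.
Proof. destruct s; reflexivity. Qed.

Definition alt (s : sign) (c : nat) : sign := if Nat.even c then s else opp_sign s.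

Lemma alt_S s c : alt s (S c) = opp_sign (alt s c).
Proof.
  unfold alt. rewrite Nat.even_succ, <- Nat.negb_even.
  destruct (Nat.even c); simpl; auto using opp_signK.
Qed.

Lemma sign_string_nth t i :
  sign_string t -> i < length t -> nth i t Pos = alt (nth 0 t Pos) i.
Proof.
  intros [_ Halt]. induction i as [|i IH]; intros Hi; [reflexivity|].
  rewrite Halt, IH, alt_S by lia. reflexivity.
Qed.

Definition alt_string (h : sign) (len : nat) : list sign := map (alt h) (seq 0 len).

Lemma length_alt_string h len : length (alt_string h len) = len.
Proof. unfold alt_string. now rewrite length_map, length_seq. Qed.

Lemma nth_alt_string h len c : c < len -> nth c (alt_string h len) Pos = alt h c.
Proof.
  intros Hc. unfold alt_string.
  rewrite (nth_indep _ Pos (alt h 0)) by (rewrite length_map, length_seq; lia).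
  now rewrite map_nth, seq_nth.
Qed.

Lemma sign_string_alt_string h len : 2 <= len -> sign_string (alt_string h len).
Proof.
  intros Hlen. split; [unfold ext_string; now rewrite length_alt_string|].
  intros j Hj. rewrite length_alt_string in Hj.
  rewrite !nth_alt_string by lia. apply alt_S.
Qed.

Fixpoint switches (P : list sign) (i : nat) : nat :=
  match i with
  | 0 => 0
  | S i' => switches P i' + (if sign_eqb (nth i P Pos) (nth i' P Pos) then 0 else 1)
  end.

Lemma switches_mono P i j : i <= j -> switches P i <= switches P j.
Proof. induction 1; simpl; lia. Qed.

Lemma nth_switches P i : nth i P Pos = alt (nth 0 P Pos) (switches P i).
Proof.
  induction i as [|i IH]; [reflexivity|]. simpl.
  destruct (sign_eqb (nth (S i) P Pos) (nth i P Pos)) eqn:E.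
  - apply sign_eqb_eq in E. now rewrite E, Nat.add_0_r.
  - rewrite Nat.add_1_r, alt_S, <- IH. apply neq_opp_sign.
    intros h. rewrite (proj2 (sign_eqb_eq _ _) (eq_sym h)) in E. discriminate.
Qed.

Lemma switches_onto P i c : c <= switches P i -> exists j, j <= i /\ switches P j = c.
Proof.
  induction i as [|i IH]; intros Hc.
  - exists 0. simpl in *. lia.
  - destruct (le_lt_dec c (switches P i)) as [h|h].
    + destruct (IH h) as [j [? ?]]. exists j. split; [lia|auto].
    + exists (S i). split; [lia|]. simpl in *. destruct sign_eqb; lia.
Qed.

Definition labelling (D : nat -> Prop) (g : nat -> sign) (s : list sign) (C : nat -> nat) : Prop :=
  (forall k, D k -> C k < length s /\ g k = nth (C k) s Pos) /\
  (forall k k', k <= k' -> D k -> D k' -> C k <= C k').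

Definition covers (D : nat -> Prop) (s : list sign) (C : nat -> nat) : Prop :=
  forall l, l < length s -> exists k, D k /\ C k = l.

Definition embedding (f : nat -> nat) (t1 t2 : list sign) : Prop :=
  (forall i j, i < j < length t1 -> f i < f j) /\
  (forall i, i < length t1 -> f i < length t2) /\
  (forall i, i < length t1 -> nth i t1 Pos = nth (f i) t2 Pos).

Definition list_labelling (P s : list sign) : (nat -> nat) -> Prop :=
  labelling (fun i => i < length P) (fun i => nth i P Pos) s.

Definition list_covers (P s : list sign) : (nat -> nat) -> Prop :=
  covers (fun i => i < length P) s.

(* Along an embedded sign string the labels must strictly increase. *)
Lemma embedding_label_bound P s u C f :
  list_labelling P s C -> sign_string u -> embedding f u P ->
  C (f 0) + length u <= length s.
Proof.
  intros [Hlab Hmono] [Hu Halt] [Hf1 [Hf2 Hf3]]. unfold ext_string in Hu.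
  assert (Hstep : forall i, S i < length u -> C (f i) < C (f (S i))).
  { intros i Hi.
    assert (Hle : C (f i) <= C (f (S i)))
      by (apply Hmono; [apply Nat.lt_le_incl, Hf1|apply Hf2|apply Hf2]; lia).
    destruct (Nat.eq_dec (C (f i)) (C (f (S i)))) as [E|E]; [|lia].
    exfalso. apply (opp_sign_neq (nth i u Pos)).
    rewrite <- Halt, Hf3, (Hf3 i), (proj2 (Hlab (f i) (Hf2 i ltac:(lia)))) by lia.
    rewrite (proj2 (Hlab _ (Hf2 (S i) Hi))), E. reflexivity. }
  assert (Hgrow : forall i, i < length u -> C (f 0) + i <= C (f i)).
  { induction i as [|i IH]; intros Hi; [lia|].
    specialize (Hstep i Hi). specialize (IH ltac:(lia)). lia. }
  specialize (Hgrow (length u - 1) ltac:(lia)).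
  pose proof (proj1 (Hlab _ (Hf2 (length u - 1) ltac:(lia)))). lia.
Qed.

Lemma labelling_substring P s C :
  list_labelling P s C -> list_covers P s C -> substring s P.
Proof.
  intros [Hlab Hmono] Hcov.
  destruct (choice (fun l i => l < length s -> i < length P /\ C i = l)) as [w Hw].
  { intros l. destruct (lt_dec l (length s)) as [h|h].
    - destruct (Hcov l h) as [i Hi]. now exists i.
    - exists 0. tauto. }
  exists w. split; [|split].
  - intros i j Hij. destruct (Hw i ltac:(lia)) as [Hi Ei]. destruct (Hw j ltac:(lia)) as [Hj Ej].
    destruct (le_lt_dec (w j) (w i)) as [h|h]; [|auto].
    pose proof (Hmono _ _ h Hj Hi). lia.
  - intros i Hi. apply Hw, Hi.
  - intros i Hi. destruct (Hw i Hi) as [Hwi Ei].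
    rewrite (proj2 (Hlab _ Hwi)), Ei. reflexivity.
Qed.

Lemma switches_labelling P :
  list_labelling P (alt_string (nth 0 P Pos) (S (switches P (length P - 1)))) (switches P).
Proof.
  split.
  - intros i Hi. rewrite length_alt_string.
    pose proof (switches_mono P i (length P - 1) ltac:(lia)).
    rewrite nth_alt_string by lia. split; [lia|apply nth_switches].
  - intros i j Hij _ _. now apply switches_mono.
Qed.

Lemma switches_covers P : 0 < length P ->
  list_covers P (alt_string (nth 0 P Pos) (S (switches P (length P - 1)))) (switches P).
Proof.
  intros HP c Hc. rewrite length_alt_string in Hc.
  destruct (switches_onto P (length P - 1) c ltac:(lia)) as [j [? ?]]. exists j. split; [lia|auto].
Qed.

Lemma reduced_string_of_iff s P : sign_string s ->
  reduced_string_of s P <-> exists C, list_labelling P s C /\ list_covers P s C.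
Proof.
  intros Hs. pose proof Hs as [Hs2 _]. unfold ext_string in Hs2. split.
  - intros [HP [_ [[f Hf] Hmax]]]. unfold ext_string in HP.
    set (h := nth 0 P Pos). set (R := switches P (length P - 1)).
    pose proof (switches_labelling P) as Hsw. pose proof (switches_covers P ltac:(lia)) as Hswc.
    fold h R in Hsw, Hswc.
    pose proof (embedding_label_bound _ _ _ _ _ Hsw Hs Hf) as Hbound.
    rewrite length_alt_string in Hbound.
    pose proof (Hmax _ (sign_string_alt_string h (S R) ltac:(lia))
                  (labelling_substring _ _ _ Hsw Hswc)) as Hmax'.
    rewrite length_alt_string in Hmax'.
    assert (Hs0 : nth 0 s Pos = h).
    { destruct Hf as [_ [Hf2 Hf3]]. rewrite Hf3, nth_switches by lia.
      replace (switches P (f 0)) with 0 by lia. reflexivity. }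
    exists (switches P). split.
    + split; [|apply Hsw]. intros i Hi. destruct (proj1 Hsw i Hi) as [Hlt Heq].
      rewrite length_alt_string in Hlt. rewrite nth_alt_string in Heq by lia.
      rewrite (sign_string_nth s), Hs0 by (auto; lia). split; [lia|auto].
    + intros c Hc. apply Hswc. rewrite length_alt_string. lia.
  - intros [C [Hlab Hcov]].
    split; [|split; [auto|split; [now apply (labelling_substring P s C)|]]].
    + destruct (Hcov 0 ltac:(lia)) as [i0 [Hi0 Ci0]].
      destruct (Hcov 1 ltac:(lia)) as [i1 [Hi1 Ci1]].
      unfold ext_string. destruct (Nat.eq_dec i0 i1); [congruence|lia].
    + intros u Hu [f Hf]. pose proof (embedding_label_bound _ _ _ _ _ Hlab Hu Hf). lia.
Qed.

Definition admissible_with (n : nat) (s2 s1 : list sign) (Z : nat -> Prop) (C : nat -> nat)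
  : Prop :=
  labelling (fun k => k < n /\ Z k) (fun k => nth k s2 Pos) s1 C /\
  covers (fun k => k < n /\ Z k) s1 C.

Definition admissible (n : nat) (s2 s1 : list sign) (Z : nat -> Prop) : Prop :=
  exists C, admissible_with n s2 s1 Z C.

Lemma admissible_with_ext n s2 s1 (Z Z' : nat -> Prop) C :
  (forall k, k < n -> (Z k <-> Z' k)) ->
  admissible_with n s2 s1 Z C -> admissible_with n s2 s1 Z' C.
Proof.
  intros E [[Hlab Hmono] Hcov]. split; [split|].
  - intros k [Hk Zk]. apply Hlab. split; [auto|now apply E].
  - intros k k' Hkk [Hk Zk] [Hk' Zk']. apply Hmono; [auto|split..]; auto; apply E; auto; lia.
  - intros l Hl. destruct (Hcov l Hl) as [k [[Hk Zk] Ck]]. exists k. split; [split|]; auto.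
    now apply E.
Qed.

Lemma admissible_ext n s2 s1 (Z Z' : nat -> Prop) :
  (forall k, k < n -> (Z k <-> Z' k)) -> admissible n s2 s1 Z -> admissible n s2 s1 Z'.
Proof. intros E [C HC]. exists C. eapply admissible_with_ext; eauto. Qed.

Definition count_below (b : nat -> bool) (k : nat) : nat := length (filter b (seq 0 k)).

Lemma count_below_mono b k k' : k <= k' -> count_below b k <= count_below b k'.
Proof.
  intros H. unfold count_below. replace k' with (k + (k' - k)) by lia.
  rewrite seq_app, filter_app, length_app. lia.
Qed.

Lemma nth_filter_count_below b n k : k < n -> b k = true ->
  count_below b k < length (filter b (seq 0 n)) /\ nth (count_below b k) (filter b (seq 0 n)) 0 = k.
Proof.
  intros Hk Hb. unfold count_below.
  replace n with (k + S (n - S k)) by lia. rewrite seq_app, filter_app, length_app. simpl.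
  rewrite Hb, app_nth2, Nat.sub_diag by lia. simpl. split; [lia|reflexivity].
Qed.

Lemma count_below_nth_filter b n i : i < length (filter b (seq 0 n)) ->
  nth i (filter b (seq 0 n)) 0 < n /\ b (nth i (filter b (seq 0 n)) 0) = true /\
  count_below b (nth i (filter b (seq 0 n)) 0) = i.
Proof.
  intros Hi. set (F := filter b (seq 0 n)). set (k := nth i F 0).
  assert (Hin : In k F) by (apply nth_In; auto).
  unfold F in Hin. rewrite filter_In, in_seq in Hin. destruct Hin as [[_ Hk] Hb].
  split; [lia|split; [auto|]].
  destruct (nth_filter_count_below b n k ltac:(lia) Hb) as [Hc Hnth].
  apply (proj1 (NoDup_nth F 0) (NoDup_filter b (seq_NoDup n 0))); auto.
Qed.

(* The two kinds of labellings correspond through [nth] and [count_below]. *)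
Lemma labelling_filter_iff (b : nat -> bool) (Z : nat -> Prop) n g s :
  (forall k, k < n -> b k = true <-> Z k) ->
  let P := map g (filter b (seq 0 n)) in
  (exists C, list_labelling P s C /\ list_covers P s C) <->
  (exists C, labelling (fun k => k < n /\ Z k) g s C /\ covers (fun k => k < n /\ Z k) s C).
Proof.
  intros HZ P. set (F := filter b (seq 0 n)).
  assert (HP : length P = length F) by apply length_map.
  assert (HnthP : forall i, i < length F -> nth i P Pos = g (nth i F 0)).
  { intros i Hi. unfold P. rewrite (nth_indep _ Pos (g 0)) by now rewrite length_map.
    apply map_nth. }
  unfold list_labelling, list_covers. rewrite HP. split.
  - intros [C [[Hlab Hmono] Hcov]]. exists (fun k => C (count_below b k)). split; [split|].
    + intros k [Hk Zk]. apply HZ in Zk; auto.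
      destruct (nth_filter_count_below b n k Hk Zk) as [Hc Hnth]. fold F in Hc, Hnth.
      destruct (Hlab _ Hc) as [HC HE]. rewrite HnthP, Hnth in HE; auto.
    + intros k k' Hkk [Hk Zk] [Hk' Zk']. apply HZ in Zk, Zk'; auto.
      apply Hmono; [now apply count_below_mono| |]; apply nth_filter_count_below; auto.
    + intros l Hl. destruct (Hcov l Hl) as [i [Hi Ci]].
      destruct (count_below_nth_filter b n i Hi) as [Hk [Hb Hc]]. fold F in Hk, Hb, Hc.
      exists (nth i F 0). rewrite Hc. split; [split; [auto|now apply HZ]|auto].
  - intros [C [[Hlab Hmono] Hcov]]. exists (fun i => C (nth i F 0)). split; [split|].
    + intros i Hi. destruct (count_below_nth_filter b n i Hi) as [Hk [Hb _]].
      rewrite HnthP by auto. apply Hlab. split; [auto|now apply HZ].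
    + intros i j Hij Hi Hj. destruct (count_below_nth_filter b n i Hi) as [Hki [Hbi Hci]].
      destruct (count_below_nth_filter b n j Hj) as [Hkj [Hbj Hcj]]. fold F in Hki, Hci, Hkj, Hcj.
      apply Hmono; [|split; [auto|now apply HZ]..].
      destruct (le_lt_dec (nth i F 0) (nth j F 0)) as [h|h]; [auto|].
      pose proof (count_below_mono b _ _ (Nat.lt_le_incl _ _ h)).
      assert (i = j) as -> by lia. lia.
    + intros l Hl. destruct (Hcov l Hl) as [k [[Hk Zk] Ck]]. apply HZ in Zk; auto.
      destruct (nth_filter_count_below b n k Hk Zk) as [Hc Hnth]. fold F in Hc, Hnth.
      exists (count_below b k). now rewrite Hnth.
Qed.

Lemma reduced_zero_pattern_iff n s2 s1 (x : nat -> R) : sign_string s1 ->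
  reduced_string_of s1 (zero_pattern n s2 x) <-> admissible n s2 s1 (fun k => x k = 0%R).
Proof.
  intros Hs1. unfold zero_pattern. rewrite reduced_string_of_iff by auto.
  apply labelling_filter_iff. intros k _. unfold zero_dec.
  destruct (Req_EM_T (x k) 0); split; congruence.
Qed.

Fixpoint first_from (s2 : list sign) (s : sign) (a fuel : nat) : nat :=
  match fuel with
  | O => a
  | S fuel' => if sign_eqb (nth a s2 Pos) s then a else first_from s2 s (S a) fuel'
  end.

Lemma first_from_spec s2 s fuel a k : a <= k < a + fuel -> nth k s2 Pos = s ->
  a <= first_from s2 s a fuel <= k /\ nth (first_from s2 s a fuel) s2 Pos = s /\
  (forall k', a <= k' < first_from s2 s a fuel -> nth k' s2 Pos <> s).
Proof.
  revert a. induction fuel as [|fuel IH]; intros a Hk Hs; simpl; [lia|].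
  destruct (sign_eqb (nth a s2 Pos) s) eqn:E.
  - apply sign_eqb_eq in E. repeat split; auto; lia.
  - assert (Ha : nth a s2 Pos <> s) by (intros h; apply sign_eqb_eq in h; congruence).
    assert (a <> k) by (intros ->; auto).
    destruct (IH (S a) ltac:(lia) Hs) as [H1 [H2 H3]].
    repeat split; auto; try lia.
    intros k' Hk'. destruct (Nat.eq_dec k' a) as [->|]; [auto|]. apply H3. lia.
Qed.

Definition start (q : nat -> nat) (i : nat) : nat :=
  match i with O => O | S i' => S (q i') end.

Fixpoint greedy (s2 s1 : list sign) (n i : nat) : nat :=
  match i with
  | O => first_from s2 (nth 0 s1 Pos) 0 n
  | S i' => first_from s2 (nth i s1 Pos) (S (greedy s2 s1 n i')) n
  end.

Definition leftmost_embedding (n : nat) (s2 s1 : list sign) (q : nat -> nat) : Prop :=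
  forall i, i < length s1 ->
    q i < n /\ start q i <= q i /\ nth (q i) s2 Pos = nth i s1 Pos /\
    (forall k, start q i <= k < q i -> nth k s2 Pos <> nth i s1 Pos).

Lemma leftmost_embedding_greedy n s2 s1 : length s2 = n -> substring s1 s2 ->
  leftmost_embedding n s2 s1 (greedy s2 s1 n).
Proof.
  intros Hn [f [Hf1 [Hf2 Hf3]]].
  assert (H : forall i, i < length s1 ->
    start (greedy s2 s1 n) i <= greedy s2 s1 n i <= f i /\
    nth (greedy s2 s1 n i) s2 Pos = nth i s1 Pos /\
    (forall k, start (greedy s2 s1 n) i <= k < greedy s2 s1 n i -> nth k s2 Pos <> nth i s1 Pos)).
  { induction i as [|i IH]; intros Hi; pose proof (Hf2 _ Hi); simpl.
    - apply first_from_spec; [lia|symmetry; auto].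
    - destruct (IH ltac:(lia)) as [[_ Hle] _]. assert (f i < f (S i)) by (apply Hf1; lia).
      apply first_from_spec; [lia|symmetry; auto]. }
  intros i Hi. destruct (H i Hi) as [? [? ?]]. pose proof (Hf2 i Hi). repeat split; auto; lia.
Qed.

Section StageCombinatorics.

Variables (n : nat) (s2 s1 : list sign) (q : nat -> nat).
Hypothesis Hs1 : sign_string s1.
Hypothesis Hq : leftmost_embedding n s2 s1 q.

Lemma greedy_lt_start i j : i < j <= length s1 -> q i < start q j.
Proof.
  intros [Hij Hj]. induction Hij as [|j Hij IH]; simpl; [lia|].
  specialize (IH ltac:(lia)). destruct (Hq j ltac:(lia)) as [_ [Hst _]]. lia.
Qed.

Lemma greedy_strict_mono i j : i < j < length s1 -> q i < q j.
Proof.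
  intros [Hij Hj]. pose proof (greedy_lt_start i j ltac:(lia)).
  destruct (Hq j Hj) as [_ [Hst _]]. lia.
Qed.

(* Leftmostness of [q] forces these labels. *)
Lemma label_greedy Z C i : admissible_with n s2 s1 Z C -> i < length s1 ->
  (forall i', i' <= i -> Z (q i')) -> C (q i) = i.
Proof.
  intros [[Hlab Hmono] Hcov]. induction i as [|i IH]; intros Hi HZ.
  - destruct (Hq 0 Hi) as [Hq0 [_ [_ Hfirst]]].
    destruct (Hcov 0 Hi) as [w [[Hw Zw] Cw]].
    destruct (le_lt_dec (q 0) w) as [h|h].
    + pose proof (Hmono _ _ h (conj Hq0 (HZ 0 (Nat.le_refl 0))) (conj Hw Zw)). lia.
    + exfalso. apply (Hfirst w); [simpl; lia|]. now rewrite (proj2 (Hlab _ (conj Hw Zw))), Cw.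
  - specialize (IH ltac:(lia) ltac:(intros; apply HZ; lia)).
    destruct (Hq i ltac:(lia)) as [Hqi _].
    destruct (Hq (S i) Hi) as [HqS [_ [Hsign Hfirst]]]. simpl in Hfirst.
    assert (Zi : q i < n /\ Z (q i)) by (split; auto).
    assert (ZS : q (S i) < n /\ Z (q (S i))) by (split; auto).
    pose proof (greedy_strict_mono i (S i) ltac:(lia)) as Hlt.
    assert (Hup : C (q (S i)) <= S i).
    { destruct (Hcov (S i) Hi) as [w [Zw Cw]].
      destruct (le_lt_dec (q (S i)) w) as [h|h]; [pose proof (Hmono _ _ h ZS Zw); lia|].
      exfalso. destruct (le_lt_dec w (q i)) as [h2|h2].
      + pose proof (Hmono _ _ h2 Zw Zi). lia.
      + apply (Hfirst w); [lia|]. now rewrite (proj2 (Hlab _ Zw)), Cw. }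
    pose proof (Hmono _ _ (Nat.lt_le_incl _ _ Hlt) Zi ZS).
    destruct (Nat.eq_dec (C (q (S i))) i) as [E|E]; [|lia].
    exfalso. apply (opp_sign_neq (nth i s1 Pos)).
    rewrite <- (proj2 Hs1 i Hi), <- Hsign, (proj2 (Hlab _ ZS)), E. reflexivity.
Qed.

Section Prefix.

Variables (Z : nat -> Prop) (C : nat -> nat) (j : nat).
Hypothesis HC : admissible_with n s2 s1 Z C.
Hypothesis Hj : j < length s1.
Hypothesis Hprefix : forall i, i < j -> Z (q i).

Lemma label_lt_start k : k < n -> Z k -> k < start q j -> C k < j.
Proof.
  intros Hk Zk Hks. destruct j as [|j']; [simpl in Hks; lia|]. simpl in Hks.
  rewrite <- (label_greedy Z C j' HC ltac:(lia) ltac:(intros; apply Hprefix; lia)).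
  destruct (Hq j' ltac:(lia)) as [Hqj' _].
  assert (C k <= C (q j'))
    by (apply (proj2 (proj1 HC)); [lia|split; auto|split; [auto|apply Hprefix; lia]]).
  lia.
Qed.

Lemma label_ge_start k : k < n -> Z k -> start q j <= k -> nth k s2 Pos = nth j s1 Pos -> j <= C k.
Proof.
  intros Hk Zk Hks Hsign. destruct j as [|j']; [lia|].
  rewrite <- (label_greedy Z C j' HC ltac:(lia) ltac:(intros; apply Hprefix; lia)).
  destruct (Hq j' ltac:(lia)) as [Hqj' _]. simpl in Hks.
  assert (C (q j') <= C k)
    by (apply (proj2 (proj1 HC)); [lia|split; [auto|apply Hprefix; lia]|split; auto]).
  destruct (Nat.eq_dec (C (q j')) (C k)) as [E|E]; [|lia].
  exfalso. apply (opp_sign_neq (nth j' s1 Pos)).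
  rewrite <- (proj2 Hs1 j' Hj), <- Hsign, (proj2 (proj1 (proj1 HC) k (conj Hk Zk))), <- E.
  now rewrite (label_greedy Z C j' HC ltac:(lia) ltac:(intros; apply Hprefix; lia)).
Qed.

(* A blocking zero has label [j - 1] yet may lie after [q j], so it must be cleared when [q j]
   becomes a zero of label [j]. *)
Definition blocking (k : nat) : Prop :=
  start q j <= k < n /\ nth k s2 Pos <> nth j s1 Pos /\
  ~ (exists i, start q j <= i < k /\ nth i s2 Pos = nth j s1 Pos /\ Z i).

Lemma label_ge_unblocked k : k < n -> Z k -> start q j <= k -> ~ blocking k -> j <= C k.
Proof.
  intros Hk Zk Hks Hnb.
  destruct (classic (nth k s2 Pos = nth j s1 Pos)) as [Hsign|Hne].
  - now apply label_ge_start.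
  - apply NNPP. intros Hlt. apply Hnb. repeat split; auto.
    intros [i [Hi [Hsi Zi]]]. apply Hlt.
    pose proof (label_ge_start i ltac:(lia) Zi ltac:(lia) Hsi).
    assert (Hin : i < n) by lia.
    pose proof (proj2 (proj1 HC) i k ltac:(lia) (conj Hin Zi) (conj Hk Zk)). lia.
Qed.

Lemma admissible_with_unblocked : admissible_with n s2 s1 (fun k => Z k /\ ~ blocking k) C.
Proof.
  destruct HC as [[Hlab Hmono] Hcov]. split; [split|].
  - intros k [Hk [Zk _]]. now apply Hlab.
  - intros k k' Hkk [Hk [Zk _]] [Hk' [Zk' _]]. now apply Hmono.
  - intros l Hl. destruct (lt_dec l j) as [h|h].
    + exists (q l). destruct (Hq l Hl) as [Hql _].
      split; [split; [auto|split; [auto|]]|].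
      * intros [Hst _]. pose proof (greedy_lt_start l j ltac:(lia)). lia.
      * apply (label_greedy Z C l HC Hl). intros; apply Hprefix; lia.
    + destruct (Hcov l Hl) as [w [[Hw Zw] Cw]]. exists w.
      split; [|auto]. split; [auto|split; [auto|]].
      intros [Hws [Hsign Hnone]].
      assert (Hlj : l <> j)
        by (intros <-; apply Hsign; now rewrite (proj2 (Hlab _ (conj Hw Zw))), Cw).
      destruct (Hcov j Hj) as [wj [[Hwj Zwj] Cwj]]. apply Hnone. exists wj.
      split; [split|split; [now rewrite (proj2 (Hlab _ (conj Hwj Zwj))), Cwj|auto]].
      * destruct (le_lt_dec (start q j) wj) as [h2|h2]; [auto|].
        pose proof (label_lt_start wj Hwj Zwj h2). lia.
      * destruct (le_lt_dec w wj) as [h2|h2]; [|auto].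
        pose proof (Hmono _ _ h2 (conj Hw Zw) (conj Hwj Zwj)). lia.
Qed.

Lemma admissible_add_greedy :
  admissible n s2 s1 (fun k => k = q j \/ (Z k /\ ~ blocking k)).
Proof.
  pose proof admissible_with_unblocked as [[Hlab Hmono] Hcov].
  destruct (Hq j Hj) as [Hqj [Hst [Hsign Hfirst]]].
  exists (fun k => if Nat.eq_dec k (q j) then j else C k). split; [split|].
  - intros k [Hk Zk]. destruct (Nat.eq_dec k (q j)) as [->|Hne]; [split; auto|].
    destruct Zk as [|Zk]; [congruence|]. now apply Hlab.
  - intros k k' Hkk [Hk Zk] [Hk' Zk'].
    destruct (Nat.eq_dec k (q j)) as [->|Hne]; destruct (Nat.eq_dec k' (q j)) as [->|Hne'];
      [lia| | |].
    + destruct Zk' as [|[Zk' Hnb']]; [congruence|]. apply label_ge_unblocked; auto. lia.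
    + destruct Zk as [|[Zk Hnb]]; [congruence|].
      destruct (le_lt_dec (start q j) k) as [h|h]; [|pose proof (label_lt_start k Hk Zk h); lia].
      exfalso. apply Hnb. repeat split; try lia.
      * apply Hfirst. lia.
      * intros [i [Hi [Hsi _]]]. apply (Hfirst i); [lia|auto].
    + destruct Zk as [|Zk]; [congruence|]. destruct Zk' as [|Zk']; [congruence|]. now apply Hmono.
  - intros l Hl. destruct (Nat.eq_dec l j) as [->|Hlj].
    + exists (q j). split; [split; auto|]. now destruct (Nat.eq_dec (q j) (q j)).
    + destruct (Hcov l Hl) as [w [[Hw Zw] Cw]]. exists w. split; [split; auto|].
      destruct (Nat.eq_dec w (q j)) as [->|]; [|auto].
      exfalso. apply Hlj. rewrite <- Cw. apply (label_greedy Z C j HC Hj).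
      intros i Hi. destruct (Nat.eq_dec i j) as [->|]; [apply Zw|apply Hprefix; lia].
Qed.

End Prefix.

Lemma admissible_greedy_image : admissible n s2 s1 (fun k => exists i, i < length s1 /\ q i = k).
Proof.
  set (C := fun k => length (filter (fun i => q i <? k) (seq 0 (length s1)))).
  assert (Hcount : forall l, l < length s1 -> forall m, m <= length s1 ->
            length (filter (fun i => q i <? q l) (seq 0 m)) = Nat.min m l).
  { intros l Hl. induction m as [|m IH]; intros Hm; [reflexivity|].
    rewrite seq_S, filter_app, length_app, IH by lia. cbn [filter]. rewrite Nat.add_0_l.
    destruct (Nat.ltb_spec (q m) (q l)) as [h|h]; cbn [length].
    - destruct (le_lt_dec l m) as [h2|h2]; [|lia].
      destruct (Nat.eq_dec l m) as [->|]; [lia|].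
      pose proof (greedy_strict_mono l m ltac:(lia)). lia.
    - destruct (le_lt_dec l m) as [h2|h2]; [lia|].
      pose proof (greedy_strict_mono m l ltac:(lia)). lia. }
  assert (HCq : forall l, l < length s1 -> C (q l) = l) by (intros; unfold C; rewrite Hcount; lia).
  exists C. split; [split|].
  - intros k [Hk [i [Hi <-]]]. rewrite HCq by auto. split; [auto|]. apply (Hq i Hi).
  - intros k k' Hkk _ _. unfold C. clear HCq Hcount C.
    induction (seq 0 (length s1)) as [|a l IH]; simpl; [lia|].
    destruct (Nat.ltb_spec (q a) k); destruct (Nat.ltb_spec (q a) k'); simpl; lia.
  - intros l Hl. exists (q l). split; [split; [apply Hq, Hl|exists l; auto]|auto].
Qed.

End StageCombinatorics.

Open Scope R_scope.

Lemma Rabs_le_iff a b : Rabs a <= b <-> - b <= a <= b.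
Proof. unfold Rabs. destruct (Rcase_abs a); split; intros; lra. Qed.

Definition sg (s2 : list sign) (k : nat) : R := sgnR (nth k s2 Pos).

Lemma sg_cases s2 k : sg s2 k = 1 \/ sg s2 k = -1.
Proof. unfold sg. destruct (nth k s2 Pos); auto. Qed.

Definition in_cube (n : nat) (s2 : list sign) (x : nat -> R) : Prop :=
  (forall k, (n <= k)%nat -> x k = 0) /\
  (forall k, (k < n)%nat -> sg s2 k * x k <= 0 /\ Rabs (x k) <= 1).

Lemma Lset_iff n s2 s1 x : sign_string s1 ->
  Lset n s2 s1 x <-> in_cube n s2 x /\ admissible n s2 s1 (fun k => x k = 0).
Proof.
  intros Hs1. unfold Lset. rewrite reduced_zero_pattern_iff by auto. unfold in_cube, sg. tauto.
Qed.

Definition seg (t : R) (x y : nat -> R) : nat -> R := fun k => x k + t * (y k - x k).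

Lemma seg_in_cube n s2 x y t : in_cube n s2 x -> in_cube n s2 y -> 0 <= t <= 1 ->
  in_cube n s2 (seg t x y).
Proof.
  intros [Tx Bx] [Ty By] Ht. split.
  - intros k Hk. unfold seg. rewrite Tx, Ty by auto. ring.
  - intros k Hk. destruct (Bx k Hk) as [Hx1 Hx2]. destruct (By k Hk) as [Hy1 Hy2].
    rewrite Rabs_le_iff in *. unfold seg.
    destruct (sg_cases s2 k) as [E|E]; rewrite E in *; split; try split; nra.
Qed.

(* Inside the cube all coordinates of a given index have the same sign, so no cancellation
   can create a zero in the interior of a segment. *)
Lemma seg_eq0 n s2 x y t k : in_cube n s2 x -> in_cube n s2 y -> 0 < t < 1 -> (k < n)%nat ->
  seg t x y k = 0 <-> x k = 0 /\ y k = 0.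
Proof.
  intros [_ Bx] [_ By] Ht Hk. destruct (Bx k Hk) as [Hx _]. destruct (By k Hk) as [Hy _].
  unfold seg. split; [|intros [-> ->]; ring].
  intros H. destruct (sg_cases s2 k) as [E|E]; rewrite E in *.
  - assert ((1 - t) * x k = 0 /\ t * y k = 0) as [] by (split; nra). split; nra.
  - assert ((1 - t) * x k = 0 /\ t * y k = 0) as [] by (split; nra). split; nra.
Qed.

Lemma seg_in_Lset n s2 s1 x y t : sign_string s1 -> Lset n s2 s1 x ->
  in_cube n s2 y -> admissible n s2 s1 (fun k => y k = 0) ->
  admissible n s2 s1 (fun k => x k = 0 /\ y k = 0) -> 0 <= t <= 1 -> Lset n s2 s1 (seg t x y).
Proof.
  intros Hs1 Lx Cy Ay Axy Ht. apply Lset_iff in Lx as [Cx Ax]; auto. apply Lset_iff; auto.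
  split; [now apply seg_in_cube|].
  destruct (Req_dec t 0) as [->|h0]; [|destruct (Req_dec t 1) as [->|h1]].
  - eapply admissible_ext; [|exact Ax]. intros k _. unfold seg. split; intros; lra.
  - eapply admissible_ext; [|exact Ay]. intros k _. unfold seg. split; intros; lra.
  - eapply admissible_ext; [|exact Axy]. intros k Hk.
    rewrite (seg_eq0 n s2 x y t k Cx Cy ltac:(lra) Hk). tauto.
Qed.

Definition dist_le (n : nat) (x y : nat -> R) (d : R) : Prop :=
  forall k, (k < n)%nat -> Rabs (x k - y k) <= d.

Lemma dist_le_sym n x y d : dist_le n x y d -> dist_le n y x d.
Proof. intros H k Hk. rewrite Rabs_minus_sym. auto. Qed.

Lemma dist_le_refl n x : dist_le n x x 0.
Proof. intros k _. unfold Rminus. rewrite Rplus_opp_r, Rabs_R0. lra. Qed.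

Definition lipschitz_homotopy (n : nat) (A : (nat -> R) -> Prop) (H : R -> (nat -> R) -> nat -> R)
    (c : R) : Prop :=
  forall t s x y d, 0 <= t <= 1 -> 0 <= s <= 1 -> A x -> A y -> 0 <= d -> dist_le n x y d ->
    dist_le n (H t x) (H s y) (c * (Rabs (t - s) + d)).

Definition lipschitz_on (n : nat) (A : (nat -> R) -> Prop) (G : (nat -> R) -> nat -> R) (K : R)
  : Prop :=
  forall x y d, A x -> A y -> 0 <= d -> dist_le n x y d -> dist_le n (G x) (G y) (K * d).

(* A quantitative Lipschitz bound replaces continuity because, unlike the latter, it survives
   precomposition with the Lipschitz maps of the stages. *)
Definition lipschitz_contraction (n : nat) (L A : (nat -> R) -> Prop) (x0 : nat -> R) : Prop :=
  exists H c, 0 <= c /\ lipschitz_homotopy n A H c /\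
    (forall t x, 0 <= t <= 1 -> A x -> L (H t x)) /\
    (forall x, A x -> forall k, H 0 x k = x k) /\
    (forall x, A x -> forall k, H 1 x k = x0 k).

Lemma Rabs_triang3 a u b v c w :
  Rabs (a * u + b * v + c * w) <= Rabs a * Rabs u + Rabs b * Rabs v + Rabs c * Rabs w.
Proof.
  rewrite <- !Rabs_mult. eapply Rle_trans; [apply Rabs_triang|].
  pose proof (Rabs_triang (a * u) (b * v)). lra.
Qed.

Lemma seg_lipschitz n A G K B : 0 <= K -> 0 <= B -> lipschitz_on n A G K ->
  (forall x, A x -> dist_le n (G x) x B) ->
  lipschitz_homotopy n A (fun t x => seg t x (G x)) (1 + K + B).
Proof.
  intros HK HB HG Hclose t s x y d Ht Hs Ax Ay Hd Hxy k Hk. unfold seg.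
  replace (x k + t * (G x k - x k) - (y k + s * (G y k - y k))) with
    ((1 - s) * (x k - y k) + s * (G x k - G y k) + (t - s) * (G x k - x k)) by ring.
  eapply Rle_trans; [apply Rabs_triang3|].
  pose proof (Hxy k Hk). pose proof (HG x y d Ax Ay Hd Hxy k Hk). pose proof (Hclose x Ax k Hk).
  rewrite (Rabs_right (1 - s)), (Rabs_right s) by lra.
  pose proof (Rabs_pos (t - s)). pose proof (Rabs_pos (x k - y k)).
  pose proof (Rabs_pos (G x k - G y k)). pose proof (Rabs_pos (G x k - x k)).
  assert (Rabs (t - s) * Rabs (G x k - x k) <= Rabs (t - s) * B) by (apply Rmult_le_compat_l; lra).
  nra.
Qed.

Section Concatenation.

Variables (n : nat) (A A' : (nat -> R) -> Prop) (H1 H2 : R -> (nat -> R) -> nat -> R).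
Variables (G : (nat -> R) -> nat -> R) (c1 c2 K : R).
Hypotheses (Hc1 : 0 <= c1) (Hc2 : 0 <= c2) (HK : 0 <= K).
Hypotheses (HH1 : lipschitz_homotopy n A H1 c1) (HH2 : lipschitz_homotopy n A' H2 c2).
Hypotheses (HGA : forall x, A x -> A' (G x)) (HG : lipschitz_on n A G K).
Hypothesis Hjoin : forall x, A x -> forall k, H1 1 x k = H2 0 (G x) k.

Definition concat (t : R) (x : nat -> R) : nat -> R :=
  if Rle_dec t (1/2) then H1 (2 * t) x else H2 (2 * t - 1) (G x).

Lemma concat_mixed t s x y d : 0 <= t <= 1/2 -> 1/2 < s <= 1 -> A x -> A y -> 0 <= d ->
  dist_le n x y d ->
  dist_le n (H1 (2 * t) x) (H2 (2 * s - 1) (G y)) ((2 * c1 + 2 * c2) * (Rabs (t - s) + d)).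
Proof.
  intros Ht Hs Ax Ay Hd Hxy k Hk.
  pose proof (HH1 (2 * t) 1 x y d ltac:(lra) ltac:(lra) Ax Ay Hd Hxy k Hk) as E1.
  pose proof (HH2 0 (2 * s - 1) (G y) (G y) 0 ltac:(lra) ltac:(lra) (HGA y Ay) (HGA y Ay)
                (Rle_refl 0) (dist_le_refl n (G y)) k Hk) as E2.
  rewrite Hjoin in E1 by auto.
  rewrite (Rabs_left1 (2 * t - 1)) in E1 by lra. rewrite (Rabs_left1 (0 - _)) in E2 by lra.
  rewrite (Rabs_left1 (t - s)) by lra.
  replace (H1 (2 * t) x k - H2 (2 * s - 1) (G y) k) with
    ((H1 (2 * t) x k - H2 0 (G y) k) + (H2 0 (G y) k - H2 (2 * s - 1) (G y) k)) by ring.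
  eapply Rle_trans; [apply Rabs_triang|].
  assert (c1 * (- (2 * t - 1) + d) <= 2 * c1 * (- (t - s) + d)) by nra.
  assert (c2 * (- (0 - (2 * s - 1)) + 0) <= 2 * c2 * (- (t - s) + d)) by nra.
  lra.
Qed.

Lemma concat_lipschitz : lipschitz_homotopy n A concat (2 * c1 + (2 + K) * c2).
Proof.
  intros t s x y d Ht Hs Ax Ay Hd Hxy k Hk. unfold concat.
  pose proof (Rabs_pos (t - s)).
  assert (Hc : 2 * c1 + 2 * c2 <= 2 * c1 + (2 + K) * c2) by nra.
  assert (Hmono : forall a, 0 <= a -> (2 * c1 + 2 * c2) * a <= (2 * c1 + (2 + K) * c2) * a)
    by (intros; nra).
  destruct (Rle_dec t (1/2)); destruct (Rle_dec s (1/2)).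
  - pose proof (HH1 (2 * t) (2 * s) x y d ltac:(lra) ltac:(lra) Ax Ay Hd Hxy k Hk) as E.
    replace (2 * t - 2 * s) with (2 * (t - s)) in E by ring.
    rewrite Rabs_mult, (Rabs_right 2) in E by lra. nra.
  - eapply Rle_trans; [apply (concat_mixed t s x y d); auto; lra|]. apply Hmono. lra.
  - rewrite Rabs_minus_sym. eapply Rle_trans.
    + apply (concat_mixed s t y x d); auto; try lra. now apply dist_le_sym.
    + rewrite Rabs_minus_sym. apply Hmono. lra.
  - pose proof (HH2 (2 * t - 1) (2 * s - 1) (G x) (G y) (K * d) ltac:(lra) ltac:(lra)
                  (HGA x Ax) (HGA y Ay) ltac:(nra) (HG x y d Ax Ay Hd Hxy) k Hk) as E.
    replace (2 * t - 1 - (2 * s - 1)) with (2 * (t - s)) in E by ring.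
    rewrite Rabs_mult, (Rabs_right 2) in E by lra. nra.
Qed.

End Concatenation.

Lemma lipschitz_contraction_step n (L A A' : (nat -> R) -> Prop) x0 G K B :
  0 <= K -> 0 <= B -> lipschitz_contraction n L A' x0 ->
  (forall x, A x -> A' (G x)) -> lipschitz_on n A G K -> (forall x, A x -> dist_le n (G x) x B) ->
  (forall t x, 0 <= t <= 1 -> A x -> L (seg t x (G x))) ->
  lipschitz_contraction n L A x0.
Proof.
  intros HK HB [H2 [c2 [Hc2 [HH2 [HL2 [H20 H21]]]]]] HGA HG Hclose Hseg.
  exists (concat (fun t x => seg t x (G x)) H2 G), (2 * (1 + K + B) + (2 + K) * c2).
  split; [nra|]. split; [|split; [|split]].
  - apply (concat_lipschitz _ _ A'); auto; try lra.
    + now apply seg_lipschitz.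
    + intros x Ax k. rewrite H20 by auto. unfold seg. ring.
  - intros t x Ht Ax. unfold concat. destruct (Rle_dec t (1/2)).
    + apply Hseg; auto; lra.
    + apply HL2; auto; lra.
  - intros x Ax k. unfold concat. destruct (Rle_dec 0 (1/2)); [|lra]. unfold seg. ring.
  - intros x Ax k. unfold concat. destruct (Rle_dec 1 (1/2)); [lra|].
    replace (2 * 1 - 1) with 1 by ring. apply H21; auto.
Qed.

Lemma lipschitz_contraction_point n (L : (nat -> R) -> Prop) x0 :
  L x0 -> lipschitz_contraction n L (fun x => x = x0) x0.
Proof.
  intros Lx0. exists (fun _ _ => x0), 0. split; [lra|]. split; [|split; [|split]].
  - intros t s x y d _ _ _ _ _ _. rewrite Rmult_0_l. apply dist_le_refl.
  - auto.
  - now intros x -> k.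
  - auto.
Qed.

Lemma contractible_of_lipschitz_contraction n (L : (nat -> R) -> Prop) x0 :
  L x0 -> lipschitz_contraction n L L x0 -> contractible n L.
Proof.
  intros Lx0 [H [c [Hc [HH [HL [H0 H1]]]]]].
  exists x0, H. repeat split; auto.
  intros t x Ht Lx eps Heps.
  set (delta := eps / (2 * (c + 1))).
  assert (Hdelta : 0 < delta) by (apply Rdiv_lt_0_compat; lra).
  assert (Edelta : delta * (2 * (c + 1)) = eps) by (unfold delta; field; lra).
  exists delta. split; [auto|]. intros s y Hs Ly Hts Hxy k Hk.
  pose proof (HH t s x y delta Ht Hs Lx Ly ltac:(lra) ltac:(intros k' Hk'; left; auto) k Hk).
  assert (c * (Rabs (t - s) + delta) <= c * (2 * delta)) by (apply Rmult_le_compat_l; lra).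
  nra.
Qed.

Lemma lipschitz_contraction_mono n (L A A' : (nat -> R) -> Prop) x0 :
  (forall x, A x -> A' x) -> lipschitz_contraction n L A' x0 -> lipschitz_contraction n L A x0.
Proof.
  intros HA [H [c [Hc [HH [HL [H0 H1]]]]]]. exists H, c.
  repeat split; auto. intros t s x y d Ht Hs Ax Ay. apply HH; auto.
Qed.

Definition min_abs (x : nat -> R) (l : list nat) : R :=
  fold_right (fun i acc => Rmin (Rabs (x i)) acc) 1 l.

Lemma min_abs_bounds x l : 0 <= min_abs x l <= 1.
Proof.
  induction l as [|a l IH]; simpl; [lra|].
  pose proof (Rabs_pos (x a)). unfold Rmin. destruct (Rle_dec _ _); lra.
Qed.

Lemma min_abs_eq0 x l : min_abs x l = 0 <-> exists i, In i l /\ x i = 0.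
Proof.
  induction l as [|a l IH]; simpl.
  - split; [lra|]. intros [i [[] _]].
  - pose proof (min_abs_bounds x l). pose proof (Rabs_pos (x a)). fold (min_abs x l).
    unfold Rmin. destruct (Rle_dec _ _) as [Hle|Hnle]; split.
    + intros h. exists a. split; auto. destruct (Req_dec (x a) 0) as [|h0]; auto.
      apply Rabs_no_R0 in h0. lra.
    + intros [i [[<-|Hi] Hx]]; [rewrite Hx, Rabs_R0; auto|].
      assert (min_abs x l = 0) by (apply IH; eauto). lra.
    + intros h. apply IH in h as [i [? ?]]. eauto.
    + intros [i [[<-|Hi] Hx]]; [rewrite Hx, Rabs_R0 in Hnle; lra|]. apply IH; eauto.
Qed.

Lemma min_abs_lipschitz x y l d : (forall i, In i l -> Rabs (x i - y i) <= d) -> 0 <= d ->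
  Rabs (min_abs x l - min_abs y l) <= d.
Proof.
  intros H Hd. induction l as [|a l IH]; simpl.
  - unfold Rminus. rewrite Rplus_opp_r, Rabs_R0. auto.
  - specialize (IH (fun i Hi => H i (or_intror Hi))). fold (min_abs x l) (min_abs y l) in *.
    pose proof (H a (or_introl eq_refl)).
    pose proof (Rabs_triang_inv (x a) (y a)). pose proof (Rabs_triang_inv (y a) (x a)).
    rewrite Rabs_minus_sym in H2.
    apply Rabs_le_iff. apply Rabs_le_iff in IH.
    unfold Rmin. destruct (Rle_dec _ _); destruct (Rle_dec _ _); split; lra.
Qed.

Section StageMap.

Variables (n : nat) (s2 s1 : list sign) (q : nat -> nat) (j : nat).

Definition witnesses (k : nat) : list nat :=
  filter (fun i => sign_eqb (nth i s2 Pos) (nth j s1 Pos)) (seq (start q j) (k - start q j)).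

Definition stage_region (k : nat) : bool :=
  (start q j <=? k)%nat && (k <? n)%nat && negb (sign_eqb (nth k s2 Pos) (nth j s1 Pos)).

(* In the region, [x k] is moved towards the face [- sg s2 k] by the distance from [x] to the
   points vanishing somewhere in [witnesses k]: exactly the blocking zeros leave [0]. *)
Definition stage_map (x : nat -> R) (k : nat) : R :=
  if (k =? q j)%nat then 0
  else if stage_region k
  then (1 - min_abs x (witnesses k)) * x k - min_abs x (witnesses k) * sg s2 k
  else x k.

Lemma In_witnesses k i :
  In i (witnesses k) <-> (start q j <= i < k)%nat /\ nth i s2 Pos = nth j s1 Pos.
Proof.
  unfold witnesses. rewrite filter_In, in_seq, sign_eqb_eq.
  split; intros [? ?]; split; auto; lia.
Qed.

Lemma stage_map_in_cube x : (q j < n)%nat -> in_cube n s2 x -> in_cube n s2 (stage_map x).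
Proof.
  intros Hqj [Tx Bx]. split.
  - intros k Hk. unfold stage_map, stage_region.
    destruct (Nat.eqb_spec k (q j)); [lia|]. destruct (Nat.ltb_spec k n); [lia|].
    rewrite Bool.andb_false_r. simpl. auto.
  - intros k Hk. unfold stage_map. destruct (k =? q j)%nat; [rewrite Rmult_0_r, Rabs_R0; lra|].
    destruct (stage_region k); [|auto].
    destruct (Bx k Hk) as [B1 B2]. rewrite Rabs_le_iff in *.
    pose proof (min_abs_bounds x (witnesses k)).
    destruct (sg_cases s2 k) as [E|E]; rewrite E in *; split; try split; nra.
Qed.

Lemma stage_map_eq0 x k : in_cube n s2 x -> (k < n)%nat ->
  stage_map x k = 0 <-> k = q j \/ (x k = 0 /\ ~ blocking n s2 s1 q (fun i => x i = 0) j k).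
Proof.
  intros [_ Bx] Hk. unfold stage_map. destruct (Nat.eqb_spec k (q j)) as [E|E]; [tauto|].
  assert (Hblock : blocking n s2 s1 q (fun i => x i = 0) j k <->
                   stage_region k = true /\ min_abs x (witnesses k) <> 0).
  { unfold blocking, stage_region. rewrite min_abs_eq0.
    setoid_rewrite In_witnesses. rewrite !Bool.andb_true_iff, Bool.negb_true_iff,
      Nat.leb_le, Nat.ltb_lt. split.
    - intros [Hr [Hs Hno]]. repeat split; try lia.
      + destruct (sign_eqb _ _) eqn:Es; [apply sign_eqb_eq in Es; contradiction|auto].
      + intros [i [[Hi Hsi] Hxi]]. apply Hno. eauto.
    - intros [[[Hr1 Hr2] Hs] Hno]. repeat split; try lia.
      + intros h. apply sign_eqb_eq in h. congruence.
      + intros [i [Hi [Hsi Hxi]]]. apply Hno. eauto. }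
  rewrite Hblock. destruct (stage_region k); [|intuition congruence].
  destruct (Bx k Hk) as [B1 _]. pose proof (min_abs_bounds x (witnesses k)).
  set (m := min_abs x (witnesses k)) in *.
  assert (Hz : (1 - m) * x k - m * sg s2 k = 0 <-> x k = 0 /\ m = 0).
  { split; [|intros [-> ->]; ring]. intros Hx.
    destruct (sg_cases s2 k) as [E'|E']; rewrite E' in *.
    - assert ((1 - m) * x k <= 0) by nra. assert (Hm : m = 0) by lra.
      rewrite Hm in Hx. split; lra.
    - assert ((1 - m) * x k >= 0) by nra. assert (Hm : m = 0) by lra.
      rewrite Hm in Hx. split; lra. }
  rewrite Hz. destruct (Req_dec m 0); tauto.
Qed.

Lemma stage_map_lipschitz x y d : in_cube n s2 x -> in_cube n s2 y -> 0 <= d -> dist_le n x y d ->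
  dist_le n (stage_map x) (stage_map y) (4 * d).
Proof.
  intros [_ Bx] [_ By] Hd Hxy k Hk. unfold stage_map.
  destruct (k =? q j)%nat; [unfold Rminus; rewrite Rplus_opp_r, Rabs_R0; lra|].
  pose proof (Hxy k Hk) as Hk'.
  destruct (stage_region k) eqn:Er; [|lra].
  assert (Hm : Rabs (min_abs x (witnesses k) - min_abs y (witnesses k)) <= d).
  { apply min_abs_lipschitz; auto. intros i Hi. apply In_witnesses in Hi.
    unfold stage_region in Er. apply Bool.andb_true_iff in Er as [Er _].
    apply Bool.andb_true_iff in Er as [_ Er]. apply Nat.ltb_lt in Er. apply Hxy. lia. }
  pose proof (min_abs_bounds x (witnesses k)). pose proof (min_abs_bounds y (witnesses k)).
  set (mx := min_abs x _) in *. set (my := min_abs y _) in *.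
  destruct (Bx k Hk) as [_ Bx2]. destruct (By k Hk) as [_ By2].
  rewrite Rabs_le_iff in *.
  destruct (sg_cases s2 k) as [E|E]; rewrite E; split; nra.
Qed.

Lemma stage_map_close x : in_cube n s2 x -> (q j < n)%nat -> dist_le n (stage_map x) x 2.
Proof.
  intros Cx Hqj k Hk. pose proof (stage_map_in_cube x Hqj Cx) as [_ B1]. destruct Cx as [_ B2].
  destruct (B1 k Hk) as [_ H1]. destruct (B2 k Hk) as [_ H2]. rewrite Rabs_le_iff in *. lra.
Qed.

End StageMap.

Section Contraction.

Variables (n : nat) (s2 s1 : list sign) (q : nat -> nat).
Hypothesis Hs1 : sign_string s1.
Hypothesis Hq : leftmost_embedding n s2 s1 q.

Definition on_greedy (k : nat) : bool := existsb (fun i => (q i =? k)%nat) (seq 0 (length s1)).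

Lemma on_greedy_true k : on_greedy k = true <-> exists i, (i < length s1)%nat /\ q i = k.
Proof.
  unfold on_greedy. rewrite existsb_exists. setoid_rewrite in_seq. setoid_rewrite Nat.eqb_eq.
  split; intros [i [Hi Hk]]; exists i; split; auto; lia.
Qed.

Definition base_point (k : nat) : R :=
  if ((k <? n)%nat && negb (on_greedy k))%bool then - sg s2 k else 0.

Lemma base_point_in_cube : in_cube n s2 base_point.
Proof.
  split.
  - intros k Hk. unfold base_point. destruct (Nat.ltb_spec k n); [lia|reflexivity].
  - intros k Hk. unfold base_point. destruct (Nat.ltb_spec k n); [|lia].
    destruct (on_greedy k); simpl; [rewrite Rmult_0_r, Rabs_R0; lra|].
    rewrite Rabs_le_iff. destruct (sg_cases s2 k) as [E|E]; rewrite E; lra.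
Qed.

Lemma base_point_eq0 k : (k < n)%nat ->
  base_point k = 0 <-> exists i, (i < length s1)%nat /\ q i = k.
Proof.
  intros Hk. rewrite <- on_greedy_true. unfold base_point.
  destruct (Nat.ltb_spec k n); [|lia]. destruct (on_greedy k); simpl; [tauto|].
  split; [|discriminate]. destruct (sg_cases s2 k) as [E|E]; rewrite E; lra.
Qed.

Lemma admissible_base_point : admissible n s2 s1 (fun k => base_point k = 0).
Proof.
  eapply admissible_ext; [|exact (admissible_greedy_image n s2 s1 q Hq)].
  intros k Hk. now rewrite base_point_eq0.
Qed.

Lemma base_point_in_Lset : Lset n s2 s1 base_point.
Proof. apply Lset_iff; auto using base_point_in_cube, admissible_base_point. Qed.

Definition greedy_zeros (j : nat) (x : nat -> R) : Prop :=
  Lset n s2 s1 x /\ forall i, (i < j)%nat -> x (q i) = 0.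

Lemma contraction_greedy_zeros_all :
  lipschitz_contraction n (Lset n s2 s1) (greedy_zeros (length s1)) base_point.
Proof.
  apply (lipschitz_contraction_step n _ _ (fun x => x = base_point) _ (fun _ => base_point) 0 2);
    try lra.
  - apply lipschitz_contraction_point, base_point_in_Lset.
  - auto.
  - intros x y d _ _ _ _. rewrite Rmult_0_l. apply dist_le_refl.
  - intros x [Lx _] k Hk. apply Lset_iff in Lx as [[_ Bx] _]; auto.
    destruct (Bx k Hk) as [_ H1]. destruct (proj2 base_point_in_cube k Hk) as [_ H2].
    rewrite Rabs_le_iff in *. lra.
  - intros t x Ht [Lx Hzeros].
    apply seg_in_Lset; auto using base_point_in_cube, admissible_base_point.
    eapply admissible_ext; [|exact admissible_base_point]. intros k Hk.
    cbn beta. rewrite base_point_eq0 by auto. split; [|tauto]. intros [i [Hi <-]].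
    split; [apply Hzeros; auto|]. eauto.
Qed.

Lemma stage_map_greedy_zeros j x : (j < length s1)%nat -> greedy_zeros j x ->
  greedy_zeros (S j) (stage_map n s2 s1 q j x) /\
  admissible n s2 s1 (fun k => x k = 0 /\ stage_map n s2 s1 q j x k = 0).
Proof.
  intros Hj [Lx Hzeros]. apply Lset_iff in Lx as Lx'; auto. destruct Lx' as [Cx [C HC]].
  destruct (Hq j Hj) as [Hqj _].
  assert (Hunblocked := admissible_with_unblocked n s2 s1 q Hs1 Hq _ C j HC Hj Hzeros).
  assert (Hadd := admissible_add_greedy n s2 s1 q Hs1 Hq _ C j HC Hj Hzeros).
  split; [split|].
  - apply Lset_iff; auto. split; [now apply stage_map_in_cube|].
    eapply admissible_ext; [|exact Hadd]. intros k Hk. now rewrite stage_map_eq0.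
  - intros i Hi. destruct (Nat.eq_dec i j) as [->|Hne].
    + unfold stage_map. now rewrite Nat.eqb_refl.
    + assert (Hij : (i < j)%nat) by lia. apply stage_map_eq0; auto; [apply Hq; lia|].
      right. split; [now apply Hzeros|]. intros [Hst _].
      pose proof (greedy_lt_start n s2 s1 q Hq i j ltac:(lia)). lia.
  - exists C. eapply admissible_with_ext; [|exact Hunblocked]. intros k Hk.
    rewrite stage_map_eq0 by auto. split; [tauto|].
    intros [Hx [->|Hnb]]; [|tauto]. split; [auto|]. intros [_ [Hsign _]].
    apply Hsign, Hq, Hj.
Qed.

Lemma contraction_greedy_zeros_stage j : (j < length s1)%nat ->
  lipschitz_contraction n (Lset n s2 s1) (greedy_zeros (S j)) base_point ->
  lipschitz_contraction n (Lset n s2 s1) (greedy_zeros j) base_point.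
Proof.
  intros Hj Hcontr. destruct (Hq j Hj) as [Hqj _].
  assert (Hcube : forall x, greedy_zeros j x -> in_cube n s2 x)
    by (intros x [Lx _]; now apply Lset_iff in Lx as [? _]).
  apply (lipschitz_contraction_step n _ _ (greedy_zeros (S j)) _ (stage_map n s2 s1 q j) 4 2);
    try lra; auto.
  - intros x Hx. now apply stage_map_greedy_zeros.
  - intros x y d Hx Hy. apply stage_map_lipschitz; auto.
  - intros x Hx. apply stage_map_close; auto.
  - intros t x Ht Hx. destruct (stage_map_greedy_zeros j x Hj Hx) as [[LGx _] Hboth].
    apply seg_in_Lset; auto; [apply Hx| |]; apply Lset_iff in LGx as [? ?]; auto.
Qed.

Lemma contraction_Lset : lipschitz_contraction n (Lset n s2 s1) (Lset n s2 s1) base_point.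
Proof.
  assert (H : forall j, (j <= length s1)%nat ->
            lipschitz_contraction n (Lset n s2 s1) (greedy_zeros (length s1 - j)) base_point).
  { induction j as [|j IH]; intros Hj.
    - rewrite Nat.sub_0_r. apply contraction_greedy_zeros_all.
    - apply contraction_greedy_zeros_stage; [lia|].
      replace (S (length s1 - S j)) with (length s1 - j)%nat by lia. apply IH. lia. }
  apply (lipschitz_contraction_mono _ _ _ (greedy_zeros 0)).
  - intros x Lx. split; [auto|intros; lia].
  - rewrite <- (Nat.sub_diag (length s1)). apply H. lia.
Qed.

End Contraction.

Theorem lemma1p15 (n : nat) (sigma2 sigma1 : list sign) :
  length sigma2 = n ->
  ext_string sigma2 ->
  sign_string sigma1 ->
  substring sigma1 sigma2 ->
  contractible n (Lset n sigma2 sigma1).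
Proof.
  (* [ext_string sigma2] is implied by [substring sigma1 sigma2]. *)
  intros Hn _ Hs1 Hsub.
  pose proof (leftmost_embedding_greedy n sigma2 sigma1 Hn Hsub) as Hq.
  apply (contractible_of_lipschitz_contraction n _
           (base_point n sigma2 sigma1 (greedy sigma2 sigma1 n))).
  - now apply base_point_in_Lset.
  - now apply contraction_Lset.
Qed.
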